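(* Let $G$ be the cube graph $Q_3$. Then $T_3(G)=6$.
   Context: Fix a set $\Sigma$ of symbols (bond-edge types) and a disjoint copy $\hat\Sigma=\{\hat a:a\in\Sigma\}$ with $\hat{\hat a}=a$; elements of $\Sigma\cup\hat\Sigma$ are cohesive-end types. A tile is a finite multiset of cohesive-end types. A pot is a finite set $P$ of tiles such that whenever $x$ occurs in a tile of $P$, $\hat x$ occurs in some tile of $P$; $\#P$ is its number of tiles. Graphs are finite, loops and multiple edges allowed. An assembly design of a graph $H$ labels the half-edges of $H$ by cohesive-end types so that the two half-edges of each edge receive complementary labels $x,\hat x$; $t_v$ is the multiset of labels at $v$, $P_\lambda(H)=\{t_v\}$, and $P$ realizes $H$ ($H\in\mathcal{O}(P)$) if some assembly design $\lambda$ has $P_\lambda(H)\subseteq P$. $P$ realizes $G$ according to Scenario 3 if $G\in\mathcal{O}(P)$, every $H\in\mathcal{O}(P)$ has $\#V(H)\ge\#V(G)$, and every $H\in\mathcal{O}(P)$ with $\#V(H)=\#V(G)$ is isomorphic to $G$. $T_3(G)=\min\{\#P: P \text{ realizes } G \text{ according to Scenario 3}\}$. *)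

From mathcomp Require Import all_boot.
From mathcomp Require Import finmap multiset.

Set Implicit Arguments.
Unset Strict Implicit.
Unset Printing Implicit Defensive.

Local Open Scope fset_scope.

(* Bond-edge types Sigma := nat (an unbounded supply of symbols).
   A cohesive-end type is (a, false) = a  or  (a, true) = hat a. *)
Definition cet : Type := (nat * bool)%type.
Definition hat (x : cet) : cet := (x.1, ~~ x.2).

Definition tile : Type := {mset cet}%mset.

Definition is_pot (P : {fset tile}) : Prop :=
  forall (t : tile) (x : cet), t \in P -> 0 < t x ->
    exists2 t' : tile, t' \in P & 0 < t' (hat x).

(* Finite multigraphs with loops and multiple edges: vertices 'I_nv,
   edge number i of the list joins (edges`_i).1 and (edges`_i).2. *)
Record mgraph := MGraph { nv : nat; edges : seq ('I_nv * 'I_nv) }.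

Definition mult (H : mgraph) (u v : 'I_(nv H)) : nat :=
  count (fun e => (e == (u, v)) || (e == (v, u))) (edges H).
Arguments mult : clear implicits.

Definition mg_iso (G H : mgraph) : Prop :=
  exists f : 'I_(nv G) -> 'I_(nv H),
    bijective f /\ forall u v, mult G u v = mult H (f u) (f v).

(* An assembly design assigns to edge i the label lam i on its first
   half-edge and hat (lam i) on its second half-edge (every labelling with
   complementary labels on each edge has this form).  The tile at v is the
   multiset of labels of the half-edges at v (a loop contributes both). *)
Definition tile_at (H : mgraph) (lam : nat -> cet) (v : 'I_(nv H)) : tile :=
  seq_mset (flatten [seq (if (nth (v, v) (edges H) i).1 == v then [:: lam i] else [::]) ++
                         (if (nth (v, v) (edges H) i).2 == v then [:: hat (lam i)] else [::])
                    | i <- iota 0 (size (edges H))]).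

Definition realizes (P : {fset tile}) (H : mgraph) : Prop :=
  exists lam : nat -> cet, forall v : 'I_(nv H), tile_at lam v \in P.

Definition in_O (P : {fset tile}) (H : mgraph) : Prop :=
  0 < nv H /\ realizes P H.

Definition scenario3 (P : {fset tile}) (G : mgraph) : Prop :=
  [/\ is_pot P, in_O P G,
      (forall H, in_O P H -> nv G <= nv H)
    & (forall H, in_O P H -> nv H = nv G -> mg_iso H G)].

Definition T3_eq (G : mgraph) (n : nat) : Prop :=
  (exists P, scenario3 P G /\ #|` P| = n) /\
  (forall P, scenario3 P G -> n <= #|` P|).

(* The cube graph Q_3: vertices 0..7, edges between labels differing in one bit. *)
Definition Q3_edges_nat : seq (nat * nat) :=
  [:: (0,1); (0,2); (0,4); (1,3); (1,5); (2,3); (2,6); (3,7);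
      (4,5); (4,6); (5,7); (6,7)].

Definition Q3 : mgraph :=
  @MGraph 8 [seq ((inord p.1 : 'I_8), (inord p.2 : 'I_8)) | p <- Q3_edges_nat].

From mathcomp Require Import all_boot zify.
From mathcomp Require Import finmap multiset.

Set Implicit Arguments.
Unset Strict Implicit.
Unset Printing Implicit Defensive.

(* Upper bound: the pot {a, b, c}, {â, â, e}, {b̂, b̂, e}, {ĉ, d, f}, {ê, d̂, d̂}, {ê, f̂, f̂}
   realizes Q3.  In any graph it realizes, balancing each bond-edge type against its complement
   forces the six tiles to occur in the proportions 2 : 1 : 1 : 2 : 1 : 1, so the graph has a
   multiple of 8 vertices; with exactly 8, the adjacencies forced between the tile types
   reproduce Q3.
   Lower bound: if two half-edges of Q3 carry the same label, exchanging their far ends gives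
   another 8-vertex graph with the same tiles, which Scenario 3 forces to be isomorphic to Q3,
   hence simple and bipartite.  An exhaustive check over the 24 half-edges turns this into
   constraints on the vertices sharing a tile: they lie in the same colour class, the common
   neighbours of two of them have tiles found nowhere else, and neither {0, 3, 5} nor {1, 2, 4}
   shares one tile.  Counting the tiles in each colour class then gives at least six. *)

Lemma uniq_map_inj_in (T U : eqType) (f : T -> U) (s : seq T) :
  uniq (map f s) -> {in s &, injective f}.
Proof.
elim: s => //= a s IHs /andP [fa_s /IHs injs] x y; rewrite !inE.
case/predU1P => [-> | xs] /predU1P [-> | ys] // fxy.
- by move: fa_s; rewrite fxy map_f.
- by move: fa_s; rewrite -fxy map_f.
- exact: injs.
Qed.

Lemma uniq3 (T : eqType) (x y z : T) : x != y -> z != x -> z != y -> uniq [:: x; y; z].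
Proof. by move=> nexy nezx nezy; rewrite /= !inE !negb_or nexy eq_sym nezx eq_sym nezy. Qed.

Lemma uniq4 (T : eqType) (a b c d : T) :
  a != b -> a != c -> a != d -> b != c -> b != d -> c != d -> uniq [:: a; b; c; d].
Proof. by move=> ab ac ad bc bd cd; rewrite /= !inE !negb_or ab ac ad bc bd cd. Qed.

Lemma card2_members (T : finType) (A : {set T}) x y : #|A| = 2 -> x \in A -> y \in A -> x != y ->
  forall v, (v \in A) = (v == x) || (v == y).
Proof.
move=> cardA xA yA nexy; suff /eqP <- : [set x; y] == A by move=> v; rewrite !inE.
by rewrite eqEcard cardA cards2 nexy subUset !sub1set xA yA.
Qed.

Lemma sum_eq_ord n (x : 'I_n) : \sum_(v < n) (x == v) = 1.
Proof. by rewrite (bigD1 x) //= eqxx big1 // => v; rewrite eq_sym => /negbTE ->. Qed.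

Lemma big_iota_swap (F G : nat -> nat) n i j :
  i < n -> j < n -> i != j -> F i + F j = G i + G j ->
  (forall k, k < n -> k != i -> k != j -> F k = G k) ->
  \sum_(k <- iota 0 n) F k = \sum_(k <- iota 0 n) G k.
Proof.
move=> ltin ltjn neij FGij FGk.
have iota_i : i \in iota 0 n by rewrite mem_iota.
have iota_j : j \in iota 0 n by rewrite mem_iota.
rewrite !(bigD1_seq i) ?iota_uniq //= !(big_mkcond (fun k => k != i)) /=.
rewrite !(bigD1_seq j) ?iota_uniq //= eq_sym neij !addnA FGij; congr (_ + _).
rewrite big_seq_cond [RHS]big_seq_cond; apply: eq_bigr => k /andP [+ nekj].
by rewrite mem_iota add0n => /andP [_ ltkn]; case: eqP => [-> //| /eqP neki]; apply: FGk.
Qed.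

Lemma hatK : involutive hat.
Proof. by case=> a b; rewrite /hat /= negbK. Qed.

Lemma hat_neq (x : cet) : hat x != x.
Proof. by case: x => a [] ; rewrite /hat /= xpair_eqE eqxx. Qed.

Lemma eq_hatC (x y : cet) : (hat x == y) = (x == hat y).
Proof. by apply/eqP/eqP => [<- | ->]; rewrite hatK. Qed.

(** * Tiles of an assembly design *)

(* The half-edge (i, s) is the first end of edge i if s = false and its second end otherwise;
   in an assembly design lam it carries dart_label (lam i) s. *)
Definition dart_end (T : Type) (e : T * T) (s : bool) : T := if s then e.2 else e.1.
Definition dart_label (x : cet) (s : bool) : cet := if s then hat x else x.

Lemma dart_label_flip x s : dart_label x (~~ s) = hat (dart_label x s).
Proof. by case: s; rewrite /= ?hatK. Qed.

Definition end_count (T : eqType) (P : pred cet) (v : T) (e : T * T) (x : cet) : nat :=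
  ((e.1 == v) && P x) + ((e.2 == v) && P (hat x)).

Lemma end_countE (T : eqType) P (v : T) e x s :
  end_count P v e x =
  (dart_end e s == v) && P (dart_label x s) + (dart_end e (~~ s) == v) && P (hat (dart_label x s)).
Proof. by case: s; rewrite /end_count /= ?hatK // addnC. Qed.

Section Design.
Variables (H : mgraph) (lam : nat -> cet).
Local Notation V := 'I_(nv H).
Local Notation E := (edges H).

Definition labels_at (v : V) : seq cet :=
  flatten [seq (if (nth (v, v) E i).1 == v then [:: lam i] else [::]) ++
               (if (nth (v, v) E i).2 == v then [:: hat (lam i)] else [::])
          | i <- iota 0 (size E)].

Lemma tile_atE v : tile_at lam v = seq_mset (labels_at v).
Proof. by []. Qed.

Definition darts : seq (nat * bool) := [seq (i, s) | i <- iota 0 (size E), s <- [:: false; true]].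

Lemma labels_at_darts v :
  labels_at v = [seq dart_label (lam d.1) d.2 | d <- darts & dart_end (nth (v, v) E d.1) d.2 == v].
Proof.
rewrite /labels_at /darts filter_flatten map_flatten -!map_comp; congr flatten.
by apply: eq_map => i /=; do 2 case: ifP.
Qed.

Lemma count_labels_at v (P : pred cet) :
  count P (labels_at v) = \sum_(i <- iota 0 (size E)) end_count P v (nth (v, v) E i) (lam i).
Proof.
rewrite count_flatten sumn_map big_map; apply: eq_bigr => i _.
by rewrite count_cat /end_count; do 2 case: ifP => _ /=; rewrite ?addn0.
Qed.

Lemma tile_at_count v y : tile_at lam v y = count_mem y (labels_at v).
Proof. by rewrite tile_atE mset_seqE. Qed.

Lemma mem_tile_at v y : (y \in tile_at lam v) = (y \in labels_at v).
Proof. by rewrite in_mset tile_at_count -has_pred1 has_count. Qed.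

(* Each half-edge has exactly one end, so summing over the vertices counts every label of the
   design once. *)
Lemma sum_count_labels_at (P : pred cet) :
  \sum_(v < nv H) count P (labels_at v) =
  \sum_(i <- iota 0 (size E)) (P (lam i) + P (hat (lam i))).
Proof.
rewrite (eq_bigr _ (fun v _ => count_labels_at v P)).
rewrite exchange_big /= big_seq [RHS]big_seq; apply: eq_bigr => i.
rewrite mem_iota add0n => /andP [_ ltiE].
case: E ltiE => [//|e0 es] ltiE; rewrite big_split /=.
by congr (_ + _); under eq_bigr => v _ do rewrite (set_nth_default e0) // -mulnb;
  rewrite -big_distrl /= sum_eq_ord mul1n.
Qed.

Lemma sum_tile_at_hat y :
  \sum_(v < nv H) tile_at lam v y = \sum_(v < nv H) tile_at lam v (hat y).
Proof.
under eq_bigr => v _ do rewrite tile_at_count.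
under [RHS]eq_bigr => v _ do rewrite tile_at_count.
rewrite !sum_count_labels_at; apply: eq_bigr => i _.
by rewrite /= addnC eq_hatC -[in hat (lam i) == _]eq_hatC hatK.
Qed.

Lemma mult_sym u w : mult H u w = mult H w u.
Proof. by apply: eq_count => e; rewrite orbC. Qed.

Lemma labels_atP v y :
  reflect (exists i s, [/\ i < size E, dart_end (nth (v, v) E i) s = v & dart_label (lam i) s = y])
          (y \in labels_at v).
Proof.
rewrite -has_pred1 has_count count_labels_at lt0n sum_nat_seq_neq0.
apply: (iffP hasP) => [[i] | [i [s [ltiE endv laby]]]].
  rewrite mem_iota add0n => /andP [_ ltiE] /=; rewrite -lt0n /end_count.
  case: (boolP (_ && _)) => [/andP [/eqP e1 /eqP l1] _ | _ /=].
    by exists i, false; split.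
  by rewrite add0n lt0b => /andP [/eqP e2 /eqP l2]; exists i, true; split.
exists i; first by rewrite mem_iota add0n.
by rewrite /= -lt0n (end_countE _ _ _ _ s) endv laby /= !eqxx.
Qed.

Lemma mult_dart_end e s : e \in E -> 0 < mult H (dart_end e s) (dart_end e (~~ s)).
Proof.
move=> eE; rewrite /mult -has_count; apply/hasP; exists e => //.
by case: e eE => a b; case: s; rewrite /= eqxx ?orbT.
Qed.

Lemma label_at_neighbour u y :
  y \in labels_at u -> exists2 w, 0 < mult H u w & hat y \in labels_at w.
Proof.
case/labels_atP => i [s [ltiE endu laby]].
set w := dart_end (nth (u, u) E i) (~~ s).
exists w; first by rewrite -{1}endu; apply/mult_dart_end/mem_nth.
apply/labels_atP; exists i, (~~ s); split => //.
  by rewrite (set_nth_default (u, u)).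
by rewrite dart_label_flip laby.
Qed.

Lemma sum_mult_le_size u : \sum_(w < nv H) mult H u w <= size (labels_at u).
Proof.
under eq_bigr => w _ do rewrite /mult -sum1_count big_mkcond /=.
rewrite -count_predT count_labels_at exchange_big (big_nth (u, u)) /index_iota subn0 leq_sum // => i _.
case: (nth _ _ _) => a b; rewrite /end_count /= !andbT.
apply: (@leq_trans (\sum_(w < nv H) ((a == u) * (b == w) + (b == u) * (a == w)))).
  by apply: leq_sum => w _; rewrite !xpair_eqE; do 4 case: eqP.
by rewrite big_split /= -!big_distrr /= !sum_eq_ord !muln1.
Qed.

Lemma size_le_sum_mult u (s : seq V) :
  uniq s -> {in s, forall w, 0 < mult H u w} -> size s <= \sum_(w < nv H) mult H u w.
Proof.
move=> uniq_s adj_s; rewrite -sum1_size.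
apply: (@leq_trans (\sum_(w <- s) mult H u w)).
  by rewrite big_seq_cond [X in _ <= X]big_seq_cond; apply: leq_sum => w /andP [/adj_s].
by rewrite big_uniq // [X in _ <= X](bigID (mem s)) /= leq_addr.
Qed.

End Design.

(** * Exchanging the far ends of two half-edges *)

(* Edges g.1 and h.1 are replaced by edges joining the end of each of the half-edges g, h to
   the far end of the other one; swap_labels keeps the labels of g and h in place. *)
Definition swap_edges (T : Type) (x0 : T * T) (es : seq (T * T)) (g h : nat * bool) :=
  let eg := nth x0 es g.1 in let eh := nth x0 es h.1 in
  set_nth x0 (set_nth x0 es g.1 (dart_end eg g.2, dart_end eh (~~ h.2)))
          h.1 (dart_end eh h.2, dart_end eg (~~ g.2)).

Definition swap_labels (lam : nat -> cet) (g h : nat * bool) : nat -> cet :=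
  fun k => if k == h.1 then dart_label (lam h.1) h.2
           else if k == g.1 then dart_label (lam g.1) g.2 else lam k.

Lemma size_swap_edges (T : Type) (x0 : T * T) es g h :
  g.1 < size es -> h.1 < size es -> size (swap_edges x0 es g h) = size es.
Proof. by move=> ltg lth; rewrite !size_set_nth (maxn_idPr ltg) (maxn_idPr lth). Qed.

Lemma map_swap_edges (T U : Type) (f : T -> U) (x0 : T * T) es g h :
  g.1 < size es -> h.1 < size es ->
  [seq (f e.1, f e.2) | e <- swap_edges x0 es g h] =
  swap_edges (f x0.1, f x0.2) [seq (f e.1, f e.2) | e <- es] g h.
Proof.
move=> ltg lth; apply: (@eq_from_nth _ (f x0.1, f x0.2)) => [|k].
  by rewrite size_map !size_swap_edges ?size_map.
rewrite size_map size_swap_edges // => ltk; rewrite (nth_map x0) ?size_swap_edges //.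
rewrite !nth_set_nth /= !(nth_map x0) //.
case: (k == h.1); first by case: h.2; case: g.2.
rewrite !nth_set_nth /=; case: (k == g.1); first by case: h.2; case: g.2.
by rewrite (nth_map x0).
Qed.

Lemma all_swap_edges (T : Type) (Q : pred T) (x0 : T * T) es g h :
  g.1 < size es -> h.1 < size es -> all (fun e => Q e.1 && Q e.2) es ->
  all (fun e => Q e.1 && Q e.2) (swap_edges x0 es g h).
Proof.
move=> ltg lth /(all_nthP x0) Qes.
have Qend i s : i < size es -> Q (dart_end (nth x0 es i) s) by move=> /Qes/andP []; case: s.
apply/(all_nthP x0) => k; rewrite size_swap_edges // => ltk.
rewrite !nth_set_nth /=; case: (k == h.1); first by rewrite !Qend.
by rewrite !nth_set_nth /=; case: (k == g.1); [rewrite !Qend | apply: Qes].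
Qed.

Lemma tile_at_swap (H : mgraph) (lam : nat -> cet) (x0 : 'I_(nv H) * 'I_(nv H)) (g h : nat * bool) :
  g.1 < size (edges H) -> h.1 < size (edges H) -> g.1 != h.1 ->
  dart_label (lam g.1) g.2 = dart_label (lam h.1) h.2 -> forall v : 'I_(nv H),
  tile_at (H := MGraph (swap_edges x0 (edges H) g h)) (swap_labels lam g h) v = tile_at lam v.
Proof.
case: g h => i s [j s'] /= ltiE ltjE neij eq_lab v; apply/msetP => y.
rewrite !tile_at_count !count_labels_at /swap_edges !size_set_nth /=.
rewrite (maxn_idPr ltiE) (maxn_idPr ltjE).
have nthE k : k < size (edges H) -> nth (v, v) (swap_edges x0 (edges H) (i, s) (j, s')) k =
    if k == j then (dart_end (nth (v, v) (edges H) j) s', dart_end (nth (v, v) (edges H) i) (~~ s))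
    else if k == i then (dart_end (nth (v, v) (edges H) i) s, dart_end (nth (v, v) (edges H) j) (~~ s'))
    else nth (v, v) (edges H) k.
  move=> ltkE; rewrite (set_nth_default x0) ?size_set_nth ?(maxn_idPr ltiE) ?(maxn_idPr ltjE) //.
  by rewrite nth_set_nth /= nth_set_nth /= -!(set_nth_default (v, v) x0).
apply: (@big_iota_swap _ _ _ i j) => // [|k ltkE neki nekj]; last first.
  by rewrite nthE // /swap_labels (negbTE neki) (negbTE nekj).
rewrite !nthE // /swap_labels (negbTE neij) !eqxx.
rewrite (end_countE _ _ _ (lam i) s) (end_countE _ _ _ (lam j) s') -eq_lab /end_count /=.
lia.
Qed.

Definition simple (H : mgraph) : Prop := forall u v, mult H u v <= (u != v).

Definition bipartite (H : mgraph) : Prop :=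
  exists c : 'I_(nv H) -> bool, forall u v, 0 < mult H u v -> c u != c v.

Lemma mg_iso_simple (H G : mgraph) : mg_iso H G -> simple G -> simple H.
Proof.
case=> f [[f' fK _] multf] simG u v.
by rewrite multf -(inj_eq (can_inj fK)).
Qed.

Lemma mg_iso_bipartite (H G : mgraph) : mg_iso H G -> bipartite G -> bipartite H.
Proof.
case=> f [_ multf] [c bipc]; exists (c \o f) => u v.
by rewrite multf; apply: bipc.
Qed.

(* The degree bound leaves no room for extra edges: the row sums agree, so the termwise
   inequalities are equalities. *)
Lemma mg_iso_of_embedding (G H : mgraph) (d : nat) (g : 'I_(nv G) -> 'I_(nv H)) :
  bijective g -> (forall p, \sum_q mult G p q = d) -> (forall u, \sum_w mult H u w <= d) ->
  (forall p q, mult G p q <= mult H (g p) (g q)) -> mg_iso H G.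
Proof.
move=> [g' gK g'K] regG degH le_mult.
have eq_mult p q : mult G p q = mult H (g p) (g q).
  have [_ eq_sum] := leqif_sum (fun q (_ : true) => leqif_eq (le_mult p q)).
  suff /forall_inP/(_ q isT)/eqP : [forall (q | true), mult G p q == mult H (g p) (g q)] by [].
  rewrite -eq_sum eqn_leq leq_sum //= regG (leq_trans _ (degH (g p))) //.
  by rewrite [leqRHS](reindex g) //; exists g' => ? _.
exists g'; split; first by exists g.
by move=> u v; rewrite -{1}[u]g'K -{1}[v]g'K eq_mult.
Qed.

(** * The cube *)

(* Graphs on 'I_8 are handled through edge lists over nat: inord goes through the opaque idP,
   so only the nat side can be evaluated by vm_compute. *)
Definition graph8 (es : seq (nat * nat)) : mgraph :=
  @MGraph 8 [seq ((inord p.1 : 'I_8), (inord p.2 : 'I_8)) | p <- es].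

Definition bounded8 (es : seq (nat * nat)) : bool := all (fun p => (p.1 < 8) && (p.2 < 8)) es.

Definition multN (es : seq (nat * nat)) (u v : nat) : nat :=
  count (fun p => (p == (u, v)) || (p == (v, u))) es.

Fixpoint allbits (n : nat) : seq (seq bool) :=
  if n is n'.+1 then [seq b :: l | b <- [:: false; true], l <- allbits n'] else [:: [::]].

Definition simpleN (es : seq (nat * nat)) : bool :=
  all (fun u => all (fun v => multN es u v <= (u != v)) (iota 0 8)) (iota 0 8).

Definition bipartiteN (es : seq (nat * nat)) : bool :=
  has (fun c => all (fun p => nth false c p.1 != nth false c p.2) es) (allbits 8).

Lemma inord8_eq (a : nat) (v : 'I_8) : a < 8 -> ((inord a : 'I_8) == v) = (a == v).
Proof. by move=> lta8; rewrite -val_eqE /= inordK. Qed.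

Lemma mult_graph8 es (u v : 'I_8) : bounded8 es -> mult (graph8 es) u v = multN es u v.
Proof.
move=> /allP bnd; rewrite /mult count_map; apply: eq_in_count => -[a b] /bnd /andP [lta ltb].
by rewrite /= !xpair_eqE !inord8_eq.
Qed.

Lemma mem_allbits n l : size l = n -> l \in allbits n.
Proof.
elim: n l => [|n IHn] [|b l] //= [/IHn l_n].
by rewrite !mem_cat in_nil orbF; case: b; apply/orP; [right | left]; apply: map_f.
Qed.

Lemma mem_iota8 (v : 'I_8) : (v : nat) \in iota 0 8.
Proof. by rewrite mem_iota ltn_ord. Qed.

Lemma simple_graph8P es : bounded8 es -> reflect (simple (graph8 es)) (simpleN es).
Proof.
move=> bnd; apply: (iffP allP) => [simN u v | simG u].
  by rewrite mult_graph8 // -val_eqE; apply: (allP (simN _ (mem_iota8 u))); apply: mem_iota8.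
rewrite mem_iota => /andP [_ ltu8]; apply/allP => v; rewrite mem_iota => /andP [_ ltv8].
by have := simG (inord u) (inord v); rewrite mult_graph8 // -val_eqE /= !inordK.
Qed.

Lemma bipartite_graph8P es : bounded8 es -> reflect (bipartite (graph8 es)) (bipartiteN es).
Proof.
move=> bnd; apply: (iffP hasP) => [[l _ /allP bipl] | [c bipc]].
  exists (fun v : 'I_8 => nth false l v) => u v; rewrite mult_graph8 // -has_count.
  case/hasP => -[a b] /bipl /= + /orP [] /eqP [<- <-] //; by rewrite eq_sym.
exists (mkseq (fun k => c (inord k)) 8); first by apply: mem_allbits; rewrite size_mkseq.
apply/allP => -[a b] abE; have /andP [lta ltb] := allP bnd _ abE.
rewrite /= !nth_mkseq //; apply: bipc.
by rewrite mult_graph8 // -has_count; apply/hasP; exists (a, b); rewrite ?inordK ?eqxx.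
Qed.

Lemma Q3_simple : simple Q3.
Proof. by apply/simple_graph8P. Qed.

Lemma Q3_bipartite : bipartite Q3.
Proof. by apply/bipartite_graph8P. Qed.

Lemma Q3_regular (p : 'I_8) : \sum_q mult Q3 p q = 3.
Proof.
under eq_bigr => q _ do rewrite mult_graph8 //.
rewrite !big_ord_recr big_ord0 /=; case: p => p /=.
by do 8 (case: p => [|p]; first by vm_compute).
Qed.

Lemma Q3_adj (p q : 'I_8) : 0 < mult Q3 p q ->
  ((p : nat), (q : nat)) \in Q3_edges_nat \/ ((q : nat), (p : nat)) \in Q3_edges_nat.
Proof.
rewrite mult_graph8 // -has_count => /hasP [e eE /orP [] /eqP eqe]; rewrite -eqe; by [left | right].
Qed.

Lemma mg_iso_Q3 (H : mgraph) (x0 : 'I_(nv H)) (L : seq 'I_(nv H)) :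
  nv H <= 8 -> uniq L -> size L = 8 -> (forall u, \sum_w mult H u w <= 3) ->
  all (fun e => 0 < mult H (nth x0 L e.1) (nth x0 L e.2)) Q3_edges_nat -> mg_iso H Q3.
Proof.
move=> leH8 uL sL degH /allP adjL.
pose g (p : 'I_8) := nth x0 L p.
have g_inj : injective g.
  by move=> p q /eqP; rewrite nth_uniq ?sL // => /eqP /val_inj.
have g_bij : bijective g by apply: inj_card_bij; rewrite ?card_ord.
apply: (@mg_iso_of_embedding Q3 H 3 g g_bij Q3_regular degH) => p q.
have := Q3_simple p q; have [-> // | pos_pq] := posnP (mult Q3 p q).
move=> le_pq; apply: (leq_trans le_pq); apply: (leq_trans (leq_b1 _)).
by case: (Q3_adj pos_pq) => /adjL adj //; rewrite mult_sym.
Qed.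

Definition cube_darts : seq (nat * bool) :=
  [seq (i, s) | i <- iota 0 (size Q3_edges_nat), s <- [:: false; true]].

Definition cube_end (d : nat * bool) : nat := dart_end (nth (0, 0) Q3_edges_nat d.1) d.2.

Definition flip (d : nat * bool) : nat * bool := (d.1, ~~ d.2).

Lemma flipK : involutive flip.
Proof. by case=> i s; rewrite /flip negbK. Qed.

Definition cube_far (d : nat * bool) : nat := cube_end (flip d).

Definition cube_label (lam : nat -> cet) (d : nat * bool) : cet := dart_label (lam d.1) d.2.

Lemma mem_cube_darts d : (d \in cube_darts) = (d.1 < size Q3_edges_nat).
Proof.
case: d => i s; apply/allpairsP/idP => [[[j t] [+ _ [-> _]]] | lti].
  by rewrite mem_iota.
by exists (i, s); rewrite mem_iota lti; case: (s).
Qed.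

Lemma flip_cube_darts d : (flip d \in cube_darts) = (d \in cube_darts).
Proof. by rewrite !mem_cube_darts. Qed.

Lemma cube_end_lt8 d : d \in cube_darts -> cube_end d < 8.
Proof. by move: d; apply/allP. Qed.

Lemma cube_label_flip lam d : cube_label lam (flip d) = hat (cube_label lam d).
Proof. exact: dart_label_flip. Qed.

Lemma Q3_edgesE : edges Q3 = [seq ((inord p.1 : 'I_8), (inord p.2 : 'I_8)) | p <- Q3_edges_nat].
Proof. by []. Qed.

Lemma cube_labels_at lam (v : 'I_8) :
  labels_at (H := Q3) lam v = [seq cube_label lam d | d <- cube_darts & cube_end d == v].
Proof.
rewrite labels_at_darts /darts Q3_edgesE size_map -/cube_darts.
have ends_eq : {in cube_darts, (fun d => dart_end (nth (v, v)
    [seq ((inord p.1 : 'I_8), (inord p.2 : 'I_8)) | p <- Q3_edges_nat] d.1) d.2 == v) =1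
    (fun d => cube_end d == v)}.
  move=> d dD; rewrite (nth_map (0, 0)) -?mem_cube_darts // -inord8_eq ?cube_end_lt8 //.
  by rewrite /cube_end; case: (nth _ _ _) => a b; case: d.2.
by rewrite (eq_in_filter ends_eq).
Qed.

(** * Lower bound *)

Definition cube_swap (g h : nat * bool) : seq (nat * nat) := swap_edges (0, 0) Q3_edges_nat g h.

Lemma tile_at_cube_swap lam g h : g \in cube_darts -> h \in cube_darts -> g.1 != h.1 ->
  cube_label lam g = cube_label lam h -> forall v : 'I_8,
  tile_at (H := graph8 (cube_swap g h)) (swap_labels lam g h) v = tile_at (H := Q3) lam v.
Proof.
rewrite !mem_cube_darts => ltg lth neq_gh eq_lab.
rewrite /graph8 /cube_swap map_swap_edges //.
by apply: (@tile_at_swap Q3 lam (inord 0, inord 0)); rewrite ?size_map.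
Qed.

Lemma cube_swap_bounded g h : g \in cube_darts -> h \in cube_darts -> bounded8 (cube_swap g h).
Proof. by rewrite !mem_cube_darts => ltg lth; apply: (all_swap_edges (Q := fun n => n < 8)). Qed.

Definition swappable (g h : nat * bool) : bool :=
  simpleN (cube_swap g h) && bipartiteN (cube_swap g h).

(* Two distinct half-edges of Q3 can carry the same label under a Scenario 3 pot only if they
   are compatible: the graph obtained by exchanging their far ends is realized by the same pot
   and has 8 vertices, so it is isomorphic to Q3, hence simple and bipartite. *)
Definition compatible (g h : nat * bool) : bool := (g == h) || (g.1 != h.1) && swappable g h.

Definition cube_parity (v : nat) : bool := odd v (+) odd (v %/ 2) (+) odd (v %/ 4).

Definition cube_adj (u c : nat) : bool := has (fun d => (cube_end d == u) && (cube_far d == c)) cube_darts.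

Definition cube_class (b : bool) : seq nat := [seq v <- iota 0 8 | cube_parity v == b].

Lemma compatible_parity g h : g \in cube_darts -> h \in cube_darts -> compatible g h ->
  cube_parity (cube_end g) = cube_parity (cube_end h).
Proof.
have /allP check : all (fun g => all (fun h => compatible g h ==>
  (cube_parity (cube_end g) == cube_parity (cube_end h))) cube_darts) cube_darts by vm_compute.
by move=> /check /allP gP /gP /implyP gh /gh /eqP.
Qed.

Lemma compatible_toward g h g' : g \in cube_darts -> h \in cube_darts -> g' \in cube_darts ->
  cube_end g != cube_end h -> compatible g h ->
  cube_end g' = cube_end h -> cube_far g' = cube_far g -> h = g'.
Proof.
have /allP check : all (fun g => all (fun h => (cube_end g != cube_end h) && compatible g h ==>
  all (fun g' => (cube_end g' == cube_end h) && (cube_far g' == cube_far g) ==> (h == g'))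
      cube_darts) cube_darts) cube_darts by vm_compute.
move=> /check /allP gP /gP /implyP gh g'D neq_ends compat_gh end_g' far_g'.
have /allP/(_ g' g'D)/implyP := gh (introT andP (conj neq_ends compat_gh)).
by rewrite end_g' far_g' !eqxx => /(_ isT)/eqP.
Qed.

Lemma compatible_at_most_one h k k' : h \in cube_darts -> k \in cube_darts -> k' \in cube_darts ->
  cube_end k = cube_end k' -> cube_end k != cube_end h ->
  compatible k h -> compatible k' h -> k = k'.
Proof.
have /allP check : all (fun h => uniq [seq cube_end k | k <- cube_darts &
  (cube_end k != cube_end h) && compatible k h]) cube_darts by vm_compute.
move=> /check /uniq_map_inj_in inj kD k'D eq_end ne_end compat_k compat_k'.
by apply: inj; rewrite // mem_filter ?kD ?k'D -?eq_end ne_end ?compat_k ?compat_k'.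
Qed.

Lemma cube_dart_at u : u < 8 -> exists2 d, d \in cube_darts & cube_end d = u.
Proof.
have /allP check : all (fun u => has (fun d => cube_end d == u) cube_darts) (iota 0 8) by [].
by move=> ltu8; have /hasP [d dD /eqP endd] := check u (mem_iota8 (Ordinal ltu8)); exists d.
Qed.

Lemma mem_cube_class b v : (v \in cube_class b) = (v < 8) && (cube_parity v == b).
Proof. by rewrite mem_filter mem_iota andbC. Qed.

Lemma cube_common_neighbours b u v : u \in cube_class b -> v \in cube_class b -> u != v ->
  exists c1 c2 a, [/\ uniq [:: c1; c2; a], all (fun x => x \in cube_class (~~ b)) [:: c1; c2; a]
    & [&& cube_adj u c1, cube_adj v c1, cube_adj u c2 & cube_adj v c2]].
Proof.
have /allP check : all (fun b => all (fun u => all (fun v => (u != v) ==>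
  has (fun c1 => has (fun c2 => has (fun a =>
    [&& uniq [:: c1; c2; a], cube_adj u c1, cube_adj v c1, cube_adj u c2 & cube_adj v c2])
  (cube_class (~~ b))) (cube_class (~~ b))) (cube_class (~~ b)))
  (cube_class b)) (cube_class b)) [:: false; true] by vm_compute.
move=> uC vC neuv; have bB : b \in [:: false; true] by case: (b).
have /allP/(_ u uC)/allP/(_ v vC)/implyP/(_ neuv) := check b bB.
case/hasP => c1 c1C /hasP [c2 c2C /hasP [a aC /and5P [uq adj1 adj2 adj3 adj4]]].
by exists c1, c2, a; split; rewrite /= ?c1C ?c2C ?aC ?adj1 ?adj2 ?adj3 ?adj4.
Qed.

Section CubeColouring.
Variables (T : eqType) (t : nat -> T).
Hypothesis t_parity : forall u v, u < 8 -> v < 8 -> t u = t v -> cube_parity u = cube_parity v.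
Hypothesis t_common_neighbour : forall u v c w, u != v -> t u = t v ->
  cube_adj u c -> cube_adj v c -> w < 8 -> w != c -> t w != t c.
Hypothesis t_035 : ~ (t 0 = t 3 /\ t 0 = t 5).
Hypothesis t_124 : ~ (t 1 = t 2 /\ t 1 = t 4).

Let class_values (b : bool) : seq T := undup (map t (cube_class b)).

Lemma size_class_values b : size (class_values b) <= 4.
Proof. by rewrite (leq_trans (size_undup _)) // size_map; case: b. Qed.

Lemma two_le_size_class_values b : 1 < size (class_values b).
Proof.
have [x [y [xC yC ne_xy]]] : exists x y, [/\ x \in cube_class b, y \in cube_class b & t x != t y].
  case: b.
    have [e12 | ne12] := eqVneq (t 1) (t 2); last by exists 1, 2.
    exists 1, 4; split => //; apply/eqP => e14; exact: t_124.
  have [e03 | ne03] := eqVneq (t 0) (t 3); last by exists 0, 3.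
  exists 0, 5; split => //; apply/eqP => e05; exact: t_035.
apply: (@uniq_leq_size _ [:: t x; t y]); first by rewrite /= inE ne_xy.
by move=> z; rewrite !inE mem_undup => /orP [] /eqP ->; apply: map_f.
Qed.


Lemma class_values_merge b : size (class_values b) < 4 -> 2 < size (class_values (~~ b)).
Proof.
move=> lt4; have [/hasP [u uC /hasP [v vC /andP [neuv /eqP tuv]]] | /hasPn no_merge] :=
  boolP (has (fun u => has (fun v => (u != v) && (t u == t v)) (cube_class b)) (cube_class b)).
  have [c1 [c2 [a [uq /and4P [c1C c2C aC _] /and4P [adj1 adj1' adj2 adj2']]]]] :=
    cube_common_neighbours uC vC neuv.
  have [ltc1 lta] : c1 < 8 /\ a < 8 by move: c1C aC; rewrite !mem_cube_class => /andP [-> _] /andP [-> _].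
  move: uq; rewrite /= !inE !negb_or => /and3P [/andP [ne12 ne1a] ne2a _].
  apply: (@uniq_leq_size _ [:: t c1; t c2; t a]).
    apply: uniq3; first exact: (t_common_neighbour neuv tuv adj2 adj2' ltc1 ne12).
      by apply: (t_common_neighbour neuv tuv adj1 adj1' lta); rewrite eq_sym.
    by apply: (t_common_neighbour neuv tuv adj2 adj2' lta); rewrite eq_sym.
  by move=> z; rewrite !inE mem_undup => /or3P [] /eqP ->; apply: map_f.
suff : 4 <= size (class_values b) by rewrite leqNgt lt4.
rewrite /class_values undup_id.
  by rewrite size_map; case: b {lt4 no_merge}.
rewrite map_inj_in_uniq; first by rewrite filter_uniq ?iota_uniq.
move=> u v uC vC tuv; apply/eqP; apply: contraT => neuv.
by have /hasPn/(_ v vC) := no_merge u uC; rewrite neuv tuv eqxx.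
Qed.

Lemma cube_tiles_lower : 6 <= size (undup (map t (iota 0 8))).
Proof.
suff : size (class_values false ++ class_values true) <= size (undup (map t (iota 0 8))).
  have : size (class_values false) < 4 -> 2 < size (class_values true) := @class_values_merge false.
  have : size (class_values true) < 4 -> 2 < size (class_values false) := @class_values_merge true.
  have := two_le_size_class_values false; have := two_le_size_class_values true.
  have := size_class_values false; have := size_class_values true.
  rewrite size_cat; lia.
apply: uniq_leq_size => [|x].
  rewrite cat_uniq !undup_uniq andbT; apply/hasPn => x; rewrite !mem_undup.
  move=> /mapP [v vC ->]; apply/mapP => -[u uC tvu].
  move: uC vC; rewrite !mem_cube_class => /andP [ltu8 /eqP pu] /andP [ltv8 /eqP pv].
  by have := t_parity ltv8 ltu8 tvu; rewrite pu pv.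
by rewrite mem_cat !mem_undup => /orP [] /mapP [v + ->]; rewrite mem_filter => /andP [_ /map_f].
Qed.

End CubeColouring.

Section LowerBound.
Variables (P : {fset tile}) (lam : nat -> cet).
Hypothesis P_Q3 : scenario3 P Q3.
Hypothesis lam_P : forall v : 'I_8, tile_at (H := Q3) lam v \in P.

Let t (n : nat) : tile := tile_at (H := Q3) lam (inord n).

Lemma mem_cube_tile n y : n < 8 ->
  (y \in t n) = has (fun d => (cube_end d == n) && (cube_label lam d == y)) cube_darts.
Proof.
move=> ltn8; rewrite /t mem_tile_at cube_labels_at inordK //.
rewrite -has_pred1 has_map; apply/hasP/hasP => [[d] | [d dD /andP [endd labd]]].
  by rewrite mem_filter => /andP [endd dD] labd; exists d; rewrite ?endd.
by exists d; rewrite ?mem_filter ?endd.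
Qed.

Lemma cube_label_in_tile d : d \in cube_darts -> cube_label lam d \in t (cube_end d).
Proof.
move=> dD; rewrite mem_cube_tile ?cube_end_lt8 //.
by apply/hasP; exists d; rewrite ?eqxx.
Qed.

Lemma cube_tile_label d n : d \in cube_darts -> t (cube_end d) = t n -> n < 8 ->
  exists2 h, h \in cube_darts & (cube_end h = n) /\ (cube_label lam h = cube_label lam d).
Proof.
move=> dD eq_t ltn8; have := cube_label_in_tile dD.
by rewrite eq_t mem_cube_tile // => /hasP [h hD /andP [/eqP endh /eqP labh]]; exists h.
Qed.

Lemma compatible_of_label_eq g h : g \in cube_darts -> h \in cube_darts ->
  cube_label lam g = cube_label lam h -> compatible g h.
Proof.
move=> gD hD eq_lab; rewrite /compatible; case: eqP => //= /eqP neq_gh.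
case: (eqVneq g.1 h.1) => [eq1 | ne1] /=.
  move: neq_gh eq_lab; case: g h eq1 {gD hD} => i s [j s'] /= <-.
  rewrite /cube_label /= xpair_eqE eqxx /=; case: s; case: s' => //= _.
    by move=> E; have := hat_neq (lam i); rewrite E eqxx.
  by move=> E; have := hat_neq (lam i); rewrite -E eqxx.
have [_ _ _ P_iso] := P_Q3.
have iso : mg_iso (graph8 (cube_swap g h)) Q3.
  apply: P_iso => //; split => //; exists (swap_labels lam g h) => v.
  by rewrite tile_at_cube_swap.
have bnd := cube_swap_bounded gD hD.
apply/andP; split.
  by apply/simple_graph8P => //; apply: mg_iso_simple iso Q3_simple.
by apply/bipartite_graph8P => //; apply: mg_iso_bipartite iso Q3_bipartite.
Qed.

Lemma cube_tile_parity u v : u < 8 -> v < 8 -> t u = t v -> cube_parity u = cube_parity v.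
Proof.
move=> ltu8 ltv8 eq_t; have [g gD endg] := cube_dart_at ltu8.
have [h hD [endh labh]] := cube_tile_label gD (etrans (congr1 t endg) eq_t) ltv8.
rewrite -endg -endh; apply: compatible_parity => //.
exact: compatible_of_label_eq.
Qed.

Lemma label_toward_common_neighbour g g' : g \in cube_darts -> g' \in cube_darts ->
  cube_end g != cube_end g' -> t (cube_end g) = t (cube_end g') -> cube_far g = cube_far g' ->
  cube_label lam g = cube_label lam g'.
Proof.
move=> gD g'D ne_end eq_t eq_far.
have [h hD [endh labh]] := cube_tile_label gD eq_t (cube_end_lt8 g'D).
have compat_gh : compatible g h by apply: compatible_of_label_eq.
have <- // : h = g'.
by apply: (compatible_toward gD hD g'D) => //; rewrite endh.
Qed.

(* The two half-edges arriving at a common neighbour c carry the same label, so their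
   flips are two half-edges at c with equal labels; a copy of tile c elsewhere would have to
   be compatible with both. *)
Lemma common_neighbour_tile u v c w : u != v -> t u = t v -> cube_adj u c -> cube_adj v c ->
  w < 8 -> w != c -> t w != t c.
Proof.
move=> neuv eq_t /hasP [g gD /andP [/eqP endg /eqP farg]] /hasP [g' g'D /andP [/eqP endg' /eqP farg']].
move=> ltw8 newc; apply/eqP => eq_t'.
have eq_lab : cube_label lam g = cube_label lam g'.
  by apply: label_toward_common_neighbour; rewrite ?endg ?endg' ?farg ?farg'.
have fgD : flip g \in cube_darts by rewrite flip_cube_darts.
have fg'D : flip g' \in cube_darts by rewrite flip_cube_darts.
have [h hD [endh labh]] := cube_tile_label fgD (etrans (congr1 t farg) (esym eq_t')) ltw8.
have compat_g : compatible (flip g) h by apply: compatible_of_label_eq.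
have compat_g' : compatible (flip g') h.
  by apply: compatible_of_label_eq; rewrite // labh !cube_label_flip eq_lab.
have eq_flip : flip g = flip g'.
  apply: (compatible_at_most_one hD) => //; first by rewrite /cube_far in farg farg'; rewrite farg farg'.
  by rewrite endh; move: farg; rewrite /cube_far => ->; rewrite eq_sym.
by move: neuv; rewrite -endg -endg' -[g]flipK eq_flip flipK eqxx.
Qed.

(* If u = end gu, v = end d and w = end gw share a tile, then gu and gw carry the same label,
   and so does d, since its label reappears at u on a compatible half-edge, which must be gu. *)
Lemma no_common_tile3 gu gw d : gu \in cube_darts -> gw \in cube_darts -> d \in cube_darts ->
  cube_end gu != cube_end gw -> cube_far gu = cube_far gw ->
  (forall h, h \in cube_darts -> cube_end h = cube_end gu -> compatible d h -> h = gu) ->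
  ~~ compatible d gw -> ~ (t (cube_end gu) = t (cube_end d) /\ t (cube_end gu) = t (cube_end gw)).
Proof.
move=> guD gwD dD ne_end eq_far only_gu /negP not_dgw [eq_ud eq_uw]; apply: not_dgw.
have lab_uw := label_toward_common_neighbour guD gwD ne_end eq_uw eq_far.
have [h hD [endh labh]] := cube_tile_label dD (esym eq_ud) (cube_end_lt8 guD).
have h_gu : h = gu by apply: only_gu => //; apply: compatible_of_label_eq.
by apply: compatible_of_label_eq; rewrite // -lab_uw -h_gu.
Qed.

(* (2, false) runs from 0 to 4, (8, true) from 5 to 4 and (7, false) from 3 to 7. *)
Lemma cube_tiles_035 : ~ (t 0 = t 3 /\ t 0 = t 5).
Proof.
have /allP only : all (fun h => (cube_end h == 0) && compatible (7, false) h ==> (h == (2, false)))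
  cube_darts by vm_compute.
have not_compat : ~~ compatible (7, false) (8, true) by vm_compute.
apply: (@no_common_tile3 (2, false) (8, true) (7, false)) => // h /only /implyP only_h endh compat.
by apply/eqP/only_h; rewrite compat andbT endh.
Qed.

(* (4, false) runs from 1 to 5, (8, false) from 4 to 5 and (6, false) from 2 to 6. *)
Lemma cube_tiles_124 : ~ (t 1 = t 2 /\ t 1 = t 4).
Proof.
have /allP only : all (fun h => (cube_end h == 1) && compatible (6, false) h ==> (h == (4, false)))
  cube_darts by vm_compute.
have not_compat : ~~ compatible (6, false) (8, false) by vm_compute.
apply: (@no_common_tile3 (4, false) (8, false) (6, false)) => // h /only /implyP only_h endh compat.
by apply/eqP/only_h; rewrite compat andbT endh.
Qed.

Lemma scenario3_Q3_card : 6 <= #|` P|.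
Proof.
apply: (leq_trans (cube_tiles_lower (t := t) _ _ cube_tiles_035 cube_tiles_124)).
- exact: cube_tile_parity.
- exact: common_neighbour_tile.
- rewrite -card_fseq; apply/fsubset_leq_card/fsubsetP => x.
  by rewrite in_fset => /mapP [v _ ->]; apply: lam_P.
Qed.

End LowerBound.

(** * Upper bound *)

Local Open Scope fset_scope.

(* The bond-edge types a, b, c, d, f, e are 0, 1, 2, 3, 4, 5, and (n, true) stands for hat n. *)
Definition cube_tiles : seq (seq cet) :=
  [:: [:: (0, false); (1, false); (2, false)]; [:: (0, true); (0, true); (5, false)];
      [:: (1, true); (1, true); (5, false)]; [:: (2, true); (3, false); (4, false)];
      [:: (5, true); (3, true); (3, true)]; [:: (5, true); (4, true); (4, true)]].

Definition cube_tile (k : nat) : seq cet := nth [::] cube_tiles k.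

Definition cube_pot : {fset tile} := [fset x in map seq_mset cube_tiles].

Definition cube_design (i : nat) : cet :=
  nth (0, false) [:: (0, false); (1, false); (2, false); (0, true); (5, false); (1, true);
                     (5, false); (2, false); (3, false); (4, false); (3, true); (4, true)] i.

Definition tile_type (x : tile) : nat := index x (map seq_mset cube_tiles).

Lemma tile_typeP x : x \in cube_pot -> tile_type x < 6 /\ x = seq_mset (cube_tile (tile_type x)).
Proof.
rewrite in_fset => x_tiles; have lt6 : tile_type x < size cube_tiles.
  by rewrite -(size_map seq_mset) index_mem.
by split; rewrite // /cube_tile -(nth_map [::] (seq_mset [::])) // nth_index.
Qed.

Lemma cube_tile_in_pot k : k < 6 -> seq_mset (cube_tile k) \in cube_pot.
Proof. by move=> ltk6; rewrite in_fset; apply/map_f/mem_nth. Qed.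

Lemma card_cube_pot : #|` cube_pot| = 6.
Proof.
have /allP check : all (fun l => all (fun l' => perm_eq l l' ==> (l == l')) cube_tiles) cube_tiles
  by vm_compute.
rewrite card_fseq undup_id // map_inj_in_uniq => [|l l' lT l'T /eq_seq_msetP perm_ll'].
  by vm_compute.
by apply/eqP; move: perm_ll'; apply/implyP/(allP (check l lT)).
Qed.

Lemma cube_pot_is_pot : is_pot cube_pot.
Proof.
have /allP check : all (fun k => all (fun x => has (fun k' => hat x \in cube_tile k') (iota 0 6))
  (cube_tile k)) (iota 0 6) by vm_compute.
move=> t x /tile_typeP [lt6 ->]; rewrite mset_seqE -has_count has_pred1 => x_tile.
have tT : tile_type t \in iota 0 6 by rewrite mem_iota.
have /allP/(_ x x_tile)/hasP [k' + hat_x] := check _ tT.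
rewrite mem_iota => /andP [_ ltk'6]; exists (seq_mset (cube_tile k')).
  exact: cube_tile_in_pot.
by rewrite mset_seqE -has_count has_pred1.
Qed.

Lemma cube_design_realizes (v : 'I_8) : tile_at (H := Q3) cube_design v \in cube_pot.
Proof.
have /allP check : all (fun v => has (fun k => perm_eq
  [seq cube_label cube_design d | d <- cube_darts & cube_end d == v] (cube_tile k)) (iota 0 6))
  (iota 0 8) by vm_compute.
have /hasP [k + /eq_seq_msetP eq_tile] := check _ (mem_iota8 v).
by rewrite mem_iota => /andP [_ ltk6]; rewrite tile_atE cube_labels_at eq_tile cube_tile_in_pot.
Qed.

Section CubePotRealizations.
Variables (H : mgraph) (lam : nat -> cet).
Hypothesis lam_pot : forall v : 'I_(nv H), tile_at lam v \in cube_pot.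

Let type (v : 'I_(nv H)) : nat := tile_type (tile_at lam v).
Let count_type (k : nat) : nat := \sum_(v < nv H) (type v == k).

Lemma type_lt6 v : type v < 6.
Proof. by have [] := tile_typeP (lam_pot v). Qed.

Lemma labels_at_type v : perm_eq (labels_at lam v) (cube_tile (type v)).
Proof. by apply/eq_seq_msetP; rewrite -tile_atE; have [] := tile_typeP (lam_pot v). Qed.

Lemma sum_by_type (F : nat -> nat) : \sum_(v < nv H) F (type v) = \sum_(k < 6) count_type k * F k.
Proof.
have decomp v : F (type v) = \sum_(k < 6) (type v == k) * F k.
  rewrite (bigD1 (Ordinal (type_lt6 v))) //= eqxx mul1n big1 ?addn0 // => k.
  by rewrite -val_eqE /= eq_sym => /negbTE ->.
rewrite (eq_bigr _ (fun v _ => decomp v)) exchange_big; apply: eq_bigr => k _.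
by rewrite -big_distrl.
Qed.

(* Balancing the labels a, b, c, d, f between the tiles that carry them and the tiles that
   carry their complements. *)
Lemma count_types : [/\ count_type 0 = 2 * count_type 1, count_type 2 = count_type 1,
  count_type 3 = 2 * count_type 1, count_type 4 = count_type 1 & count_type 5 = count_type 1].
Proof.
have balance y : \sum_(k < 6) count_type k * count_mem y (cube_tile k) =
                 \sum_(k < 6) count_type k * count_mem (hat y) (cube_tile k).
  rewrite -(sum_by_type (fun k => count_mem y (cube_tile k))).
  rewrite -(sum_by_type (fun k => count_mem (hat y) (cube_tile k))).
  have := sum_tile_at_hat H lam y.
  by under eq_bigr => v _ do rewrite tile_at_count (permP (labels_at_type v));
    under [in RHS]eq_bigr => v _ do rewrite tile_at_count (permP (labels_at_type v)).
have := balance (0, false); have := balance (1, false); have := balance (2, false).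
have := balance (3, false); have := balance (4, false).
rewrite !big_ord_recr !big_ord0 /= => bal_f bal_d bal_c bal_b bal_a; split; lia.
Qed.

Lemma nv_count_types : nv H = 8 * count_type 1.
Proof.
have -> : nv H = \sum_(k < 6) count_type k * 1.
  by rewrite -(sum_by_type (fun=> 1)) sum_nat_const card_ord muln1.
have [] := count_types; rewrite !big_ord_recr big_ord0 /=; lia.
Qed.

Lemma card_of_type k : #|[set v | type v == k]| = count_type k.
Proof. by rewrite -sum1_card big_mkcond; apply: eq_bigr => v _; rewrite inE; case: eqP. Qed.

Lemma type_single k : count_type k = 1 -> exists x, forall v, (type v == k) = (v == x).
Proof.
by rewrite -card_of_type => /eqP/cards1P [x typex]; exists x => v; rewrite -in_set1 -typex inE.
Qed.

Lemma type_pair k x y : count_type k = 2 -> type x = k -> type y = k -> x != y ->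
  forall v, (type v == k) = (v == x) || (v == y).
Proof.
rewrite -card_of_type => card2 typex typey nexy v.
by rewrite -(card2_members card2) ?inE ?typex ?typey.
Qed.

Lemma degree_le3 u : \sum_(w < nv H) mult H u w <= 3.
Proof.
apply: leq_trans (sum_mult_le_size lam u) _; rewrite (perm_size (labels_at_type u)).
by have := type_lt6 u; case: (type u) => [|[|[|[|[|[|]]]]]].
Qed.

Lemma type_neighbour u y ks : y \in cube_tile (type u) ->
  [seq k <- iota 0 6 | hat y \in cube_tile k] = ks -> exists2 w, 0 < mult H u w & type w \in ks.
Proof.
rewrite -(perm_mem (labels_at_type u)) => /label_at_neighbour [w adj_uw hat_y] <-.
by exists w; rewrite // mem_filter mem_iota type_lt6 -(perm_mem (labels_at_type w)) hat_y.
Qed.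

Lemma neq_of_type v w : type v != type w -> v != w.
Proof. by apply: contraNneq => ->. Qed.

Lemma type_neighbour1 u y k : y \in cube_tile (type u) ->
  [seq k <- iota 0 6 | hat y \in cube_tile k] = [:: k] -> exists2 w, 0 < mult H u w & type w = k.
Proof. by move=> yu ks; have [w adj_w] := type_neighbour yu ks; rewrite inE => /eqP; exists w. Qed.

Lemma adj_of_type u y k x : y \in cube_tile (type u) ->
  [seq k <- iota 0 6 | hat y \in cube_tile k] = [:: k] ->
  (forall v, (type v == k) = (v == x)) -> 0 < mult H u x.
Proof.
move=> yu ks typex; have [w adj_w /eqP] := type_neighbour1 yu ks.
by rewrite typex => /eqP <-.
Qed.

Section EightVertices.
Hypothesis nv8 : nv H = 8.

Lemma count_type8 k : k < 6 -> count_type k = nth 0 [:: 2; 1; 1; 2; 1; 1] k.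
Proof.
have [n0 n2 n3 n4 n5] := count_types; have := nv_count_types; rewrite nv8 => n1.
by case: k => [|[|[|[|[|[|k]]]]]] //= _; lia.
Qed.

Lemma type_single8 k : k \in [:: 1; 2; 4; 5] -> exists x, forall v, (type v == k) = (v == x).
Proof. by rewrite !inE => /or4P [] /eqP ->; apply: type_single; rewrite count_type8. Qed.

Lemma type3_adj_type45 b g : type b = 3 -> type g \in [:: 4; 5] -> 0 < mult H b g.
Proof.
move=> tb; have [x4 type4] := type_single8 (k := 4) isT.
have [x5 type5] := type_single8 (k := 5) isT.
rewrite !inE => /orP [] /eqP tg.
  have -> : g = x4 by apply/eqP; rewrite -type4 tg.
  by apply: (adj_of_type (y := (3, false))); rewrite ?tb.
have -> : g = x5 by apply/eqP; rewrite -type5 tg.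
by apply: (adj_of_type (y := (4, false))); rewrite ?tb.
Qed.

Lemma type3_neighbours_neq a1 a2 b1 b2 : a1 != a2 -> type a1 = 0 -> type a2 = 0 ->
  type b1 = 3 -> 0 < mult H a1 b1 -> 0 < mult H a2 b2 -> b1 != b2.
Proof.
move=> ne_a ta1 ta2 tb1 adj1 adj2; apply/eqP => eq_b.
have [x4 type4] := type_single8 (k := 4) isT; have [x5 type5] := type_single8 (k := 5) isT.
have tx4 : type x4 = 4 by apply/eqP; rewrite type4.
have tx5 : type x5 = 5 by apply/eqP; rewrite type5.
have := degree_le3 b1; apply/negP; rewrite -ltnNge.
apply: (@size_le_sum_mult H b1 [:: a1; a2; x4; x5]) => [|w].
  apply: uniq4; first exact: ne_a.
  - by apply: (@neq_of_type a1 x4); rewrite ta1 tx4.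
  - by apply: (@neq_of_type a1 x5); rewrite ta1 tx5.
  - by apply: (@neq_of_type a2 x4); rewrite ta2 tx4.
  - by apply: (@neq_of_type a2 x5); rewrite ta2 tx5.
  - by apply: (@neq_of_type x4 x5); rewrite tx4 tx5.
rewrite !inE => /or4P [] /eqP ->.
- by rewrite mult_sym.
- by rewrite mult_sym eq_b.
- by apply: type3_adj_type45; rewrite ?tx4.
- by apply: type3_adj_type45; rewrite ?tx5.
Qed.

Lemma type45_neighbours_neq x1 x2 b1 b2 g1 g2 : type x1 = 1 -> type x2 = 2 ->
  type b1 = 3 -> type b2 = 3 -> b1 != b2 -> type g1 \in [:: 4; 5] ->
  0 < mult H x1 g1 -> 0 < mult H x2 g2 -> g1 != g2.
Proof.
move=> tx1 tx2 tb1 tb2 ne_b tg1 adj1 adj2; apply/eqP => eq_g.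
have := degree_le3 g1; apply/negP; rewrite -ltnNge.
apply: (@size_le_sum_mult H g1 [:: x1; x2; b1; b2]) => [|w].
  apply: uniq4; last exact: ne_b.
  - by apply: (@neq_of_type x1 x2); rewrite tx1 tx2.
  - by apply: (@neq_of_type x1 b1); rewrite tx1 tb1.
  - by apply: (@neq_of_type x1 b2); rewrite tx1 tb2.
  - by apply: (@neq_of_type x2 b1); rewrite tx2 tb1.
  - by apply: (@neq_of_type x2 b2); rewrite tx2 tb2.
rewrite !inE => /or4P [] /eqP ->.
- by rewrite mult_sym.
- by rewrite mult_sym eq_g.
- by rewrite mult_sym; apply: type3_adj_type45.
- by rewrite mult_sym; apply: type3_adj_type45.
Qed.

Lemma uniq_by_type a1 a2 x1 x2 b1 b2 g1 g2 :
  (forall v, (type v == 0) = (v == a1) || (v == a2)) -> (forall v, (type v == 1) = (v == x1)) ->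
  (forall v, (type v == 2) = (v == x2)) -> (forall v, (type v == 3) = (v == b1) || (v == b2)) ->
  type g1 \in [:: 4; 5] -> type g2 \in [:: 4; 5] -> g1 != g2 ->
  uniq [:: a1; x1; x2; a2; b1; g1; g2; b2].
Proof.
move=> type0 type1 type2 type3 tg1 tg2 ne_g.
have [x4 type4] := type_single8 (k := 4) isT; have [x5 type5] := type_single8 (k := 5) isT.
have g45 : (x4 \in [:: g1; g2]) && (x5 \in [:: g1; g2]).
  have gE g : type g \in [:: 4; 5] -> (g == x4) || (g == x5) by rewrite !inE -type4 -type5.
  move: (gE _ tg1) (gE _ tg2) ne_g; rewrite !inE.
  by case/orP => /eqP -> /orP [] /eqP ->; rewrite ?eqxx ?orbT.
apply: (@leq_size_uniq _ (enum 'I_(nv H))); first exact: enum_uniq; last first.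
  by rewrite size_enum_ord (leq_trans _ (eq_leq (esym nv8))).
move=> v _; rewrite !inE; have := type_lt6 v.
case tv : (type v) => [|[|[|[|[|[|k]]]]]] // _.
- by move: (type0 v); rewrite tv eqxx => /esym/orP [] /eqP ->; rewrite eqxx ?orbT.
- by move: (type1 v); rewrite tv eqxx => /esym/eqP ->; rewrite eqxx ?orbT.
- by move: (type2 v); rewrite tv eqxx => /esym/eqP ->; rewrite eqxx ?orbT.
- by move: (type3 v); rewrite tv eqxx => /esym/orP [] /eqP ->; rewrite eqxx ?orbT.
- move: (type4 v) g45; rewrite tv eqxx => /esym/eqP -> /andP [+ _].
  by rewrite !inE => /orP [] ->; rewrite ?orbT.
- move: (type5 v) g45; rewrite tv eqxx => /esym/eqP -> /andP [_].
  by rewrite !inE => /orP [] ->; rewrite ?orbT.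
Qed.

(* Vertices 0, ..., 7 of the cube become: a copy a1 of {a, b, c}, the copies of {â, â, e} and
   {b̂, b̂, e}, the other copy a2 of {a, b, c}, the {ĉ, d, f}-neighbour of a1, the neighbours
   across e of the {â, â, e}- and {b̂, b̂, e}-vertices, and the {ĉ, d, f}-neighbour of a2. *)
Lemma realization8_cube_order : exists2 L : seq 'I_(nv H), uniq L /\ size L = 8 &
  forall x0, all (fun e => 0 < mult H (nth x0 L e.1) (nth x0 L e.2)) Q3_edges_nat.
Proof.
have [x1 type1] := type_single8 (k := 1) isT; have [x2 type2] := type_single8 (k := 2) isT.
have tx1 : type x1 = 1 by apply/eqP; rewrite type1.
have tx2 : type x2 = 2 by apply/eqP; rewrite type2.
have [a1 [a2 [ne_a /setP type0]]] : exists a1 a2, a1 != a2 /\ [set v | type v == 0] = [set a1; a2].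
  by apply/cards2P; rewrite card_of_type count_type8.
have ta1 : type a1 = 0 by have := type0 a1; rewrite !inE eqxx => /eqP.
have ta2 : type a2 = 0 by have := type0 a2; rewrite !inE eqxx orbT => /eqP.
have to_x1 a : type a = 0 -> 0 < mult H a x1.
  by move=> ta; apply: (adj_of_type (y := (0, false))); rewrite ?ta.
have to_x2 a : type a = 0 -> 0 < mult H a x2.
  by move=> ta; apply: (adj_of_type (y := (1, false))); rewrite ?ta.
have [b1 adj_a1b1 tb1] : exists2 b, 0 < mult H a1 b & type b = 3.
  by apply: (@type_neighbour1 a1 (2, false)); rewrite ?ta1.
have [b2 adj_a2b2 tb2] : exists2 b, 0 < mult H a2 b & type b = 3.
  by apply: (@type_neighbour1 a2 (2, false)); rewrite ?ta2.
have [g1 adj_x1g1 tg1] : exists2 g, 0 < mult H x1 g & type g \in [:: 4; 5].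
  by apply: (@type_neighbour x1 (5, false)); rewrite ?tx1.
have [g2 adj_x2g2 tg2] : exists2 g, 0 < mult H x2 g & type g \in [:: 4; 5].
  by apply: (@type_neighbour x2 (5, false)); rewrite ?tx2.
have ne_b := type3_neighbours_neq ne_a ta1 ta2 tb1 adj_a1b1 adj_a2b2.
have ne_g := type45_neighbours_neq tx1 tx2 tb1 tb2 ne_b tg1 adj_x1g1 adj_x2g2.
exists [:: a1; x1; x2; a2; b1; g1; g2; b2].
  split => //; apply: uniq_by_type tg1 tg2 ne_g => //.
    exact: type_pair (count_type8 (k := 0) isT) ta1 ta2 ne_a.
  exact: type_pair (count_type8 (k := 3) isT) tb1 tb2 ne_b.
move=> x0; rewrite /= (to_x1 _ ta1) (to_x2 _ ta1) adj_a1b1 adj_x1g1 adj_x2g2 adj_a2b2.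
rewrite (mult_sym x1) (to_x1 _ ta2) (mult_sym x2) (to_x2 _ ta2) (mult_sym g1) (mult_sym g2).
by rewrite !(type3_adj_type45 tb1) ?(type3_adj_type45 tb2).
Qed.

Lemma realization8_iso_Q3 : mg_iso H Q3.
Proof.
have [L [uniq_L size_L] adj_L] := realization8_cube_order.
have [x0 _] : exists x0 : 'I_(nv H), true by rewrite nv8; exists ord0.
apply: (@mg_iso_Q3 H x0 L _ uniq_L size_L _ (adj_L x0)); first by rewrite nv8.
exact: degree_le3.
Qed.

End EightVertices.

End CubePotRealizations.

Theorem proposition3 : T3_eq Q3 6.
Proof.
split; last first.
  move=> P P_Q3; have [_ [_ [lam lam_P]] _ _] := P_Q3.
  exact: scenario3_Q3_card P_Q3 lam_P.
exists cube_pot; split; last exact: card_cube_pot.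
split.
- exact: cube_pot_is_pot.
- by split => //; exists cube_design; apply: cube_design_realizes.
- move=> H [nv_pos [lam lam_pot]]; move: nv_pos.
  by rewrite (nv_count_types lam_pot) /=; case: (\sum_(v < nv H) _) => // n; rewrite mulnS.
- by move=> H [_ [lam lam_pot]]; apply: realization8_iso_Q3.
Qed.
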